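(* The set of all $P^0\in L\cap\Delta^{n-1}_+$ satisfying $\bigl(P^0+\mathbf{Q}(P^0,P^* )\bigr)\cap L=\{P^0\}$ equals $$\bigcup\Bigl\{L\cap\mathcal{C}_\sigma\cap\Delta^{n-1}_+\ :\ \sigma \text{ a surjection } \{1,\dots,n\}\to\{1,\dots,k'+1\},\ 0\le k'\le n-1,\ L\cap\mathcal{C}_\sigma\neq\emptyset,\ L^0\cap Q_\sigma=\{0\}\Bigr\}.$$ Moreover, $\mathbf{Q}(P,P^* )=Q_\sigma$ for every $P\in\mathcal{C}_\sigma$.
   Context: Fix $n\ge 2$ and $P^*=(p^*_i)$ with $p^*_i>0$, $\sum_i p^*_i=1$; $\Delta^{n-1}_+=\{P\in\mathbb{R}^n: p_i>0,\ \sum_i p_i=1\}$. For $i\neq j$, $\gamma^{ji}=-\gamma^{ij}$ is the vector with $\gamma^{ji}_j=-1$, $\gamma^{ji}_i=1$, other coordinates $0$; ${\rm cone}$ denotes non-negative linear combinations; ${\rm sign}$ is three-valued; $\mathbf{Q}(P,P^* )={\rm cone}\{\gamma^{ji}\,{\rm sign}(\tfrac{p_j}{p^*_j}-\tfrac{p_i}{p^*_i}) : 1\le j<i\le n\}$. For a surjection $\sigma:\{1,\dots,n\}\to\{1,\dots,k'+1\}$: $\mathcal{C}_\sigma=\{P\in\Delta^{n-1}:\ \frac{p_i}{p^*_i}=\frac{p_j}{p^*_j}$ if $\sigma(i)=\sigma(j)$, and $\frac{p_i}{p^*_i}>\frac{p_j}{p^*_j}$ if $\sigma(j)=\sigma(i)+1\}$,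 and $Q_\sigma={\rm cone}\{\gamma^{ij}:\ \sigma(j)=\sigma(i)+1\}$. The condition manifold is $L=\{P:\ \sum_j m_{rj}p_j=M_r,\ r=0,\dots,k\}$ with $m_{0j}=1$, $M_0=1$, $L\cap\Delta^{n-1}_+\ne\emptyset$, and $L^0=\{x\in\mathbb{R}^n:\ \sum_j m_{rj}x_j=0,\ r=0,\dots,k\}$. *)

(* vectors in R^n are row vectors 'rV[R]_n over an arbitrary
   real field R; indices {1..n} are rendered as 'I_n = {0..n-1}. *)
From HB Require Import structures.
From mathcomp Require Import all_boot all_order all_algebra.
Set Implicit Arguments. Unset Strict Implicit. Unset Printing Implicit Defensive.
Import Order.TTheory GRing.Theory Num.Theory.
Local Open Scope ring_scope.

Section Defs.
Variables (R : realFieldType) (n : nat).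

Definition co (P : 'rV[R]_n) (j : 'I_n) : R := P 0 j.

(* gamma a b : coordinate a equal to -1, coordinate b equal to 1, others 0.
   So gamma j i is the paper's gamma^{ji}, and gamma i j = - gamma j i. *)
Definition gamma (a b : 'I_n) : 'rV[R]_n :=
  \row_l (((l == b)%:R : R) - (l == a)%:R).

Definition in_cone (I : finType) (Pr : pred I) (g : I -> 'rV[R]_n)
  (x : 'rV[R]_n) : Prop :=
  exists c : I -> R, (forall i, 0 <= c i) /\ x = \sum_(i | Pr i) c i *: g i.

Definition simplex (P : 'rV[R]_n) : Prop :=
  (forall i, 0 <= co P i) /\ \sum_i co P i = 1.

Definition simplex_pos (P : 'rV[R]_n) : Prop :=
  (forall i, 0 < co P i) /\ \sum_i co P i = 1.

Definition Qcone (P Ps : 'rV[R]_n) : 'rV[R]_n -> Prop :=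
  in_cone (fun ji : 'I_n * 'I_n => (ji.1 < ji.2)%N)
    (fun ji => Num.sg (co P ji.1 / co Ps ji.1 - co P ji.2 / co Ps ji.2)
               *: gamma ji.1 ji.2).

Definition Csigma (Ps : 'rV[R]_n) (k' : nat) (sigma : 'I_n -> 'I_k'.+1)
  (P : 'rV[R]_n) : Prop :=
  simplex P /\
  (forall i j, sigma i = sigma j -> co P i / co Ps i = co P j / co Ps j) /\
  (forall i j, val (sigma j) = (val (sigma i)).+1 ->
       co P i / co Ps i > co P j / co Ps j).

Definition Qsigma (k' : nat) (sigma : 'I_n -> 'I_k'.+1) : 'rV[R]_n -> Prop :=
  in_cone (fun ij : 'I_n * 'I_n => val (sigma ij.2) == (val (sigma ij.1)).+1)
    (fun ij => gamma ij.1 ij.2).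

Definition inL (k : nat) (m : 'M[R]_(k.+1, n)) (M : 'I_k.+1 -> R)
  (P : 'rV[R]_n) : Prop :=
  forall r, \sum_j m r j * co P j = M r.

Definition inL0 (k : nat) (m : 'M[R]_(k.+1, n)) (x : 'rV[R]_n) : Prop :=
  forall r, \sum_j m r j * co x j = 0.

End Defs.

Definition surj (A B : finType) (f : A -> B) : Prop := forall b, exists a, f a = b.

From HB Require Import structures.
From mathcomp Require Import all_boot all_order all_algebra.
From mathcomp Require Import ring zify.
Import Order.TTheory GRing.Theory Num.Theory.
Local Open Scope ring_scope.

(* Write r_i = p_i / ps_i.  The cone Q(P,Ps) depends only on the order
   pattern of r, recorded by an ordered partition sigma of the indices into
   level sets of r listed by decreasing value ("sigma is a level order of r";
   P lies in C_sigma iff sigma is a level order of P/Ps).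
   1. Every r has a level order with at most n blocks: send i to the number
      of distinct values of r above r_i.
   2. If sigma is a surjective level order of r, the sign cone of r equals
      Q_sigma, since gamma^{ij} for sigma(i) < sigma(j) telescopes along
      consecutive blocks.
   The first claim follows from 1-3 applied to the level order of P0/Ps. *)

Set Implicit Arguments. Unset Strict Implicit. Unset Printing Implicit Defensive.

Section Cones.
Variables (R : realFieldType) (n : nat).

Lemma cone0 (I : finType) (Pr : pred I) (g : I -> 'rV[R]_n) : in_cone Pr g 0.
Proof. by exists (fun=> 0); split=> //; rewrite big1 // => i _; rewrite scale0r. Qed.

Lemma coneD (I : finType) (Pr : pred I) (g : I -> 'rV[R]_n) x y :
  in_cone Pr g x -> in_cone Pr g y -> in_cone Pr g (x + y).
Proof.
move=> [c1 [c1_ge0 ->]] [c2 [c2_ge0 ->]]; exists (fun i => c1 i + c2 i); split.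
  by move=> i; rewrite addr_ge0.
by rewrite -big_split /=; apply: eq_bigr => i _; rewrite scalerDl.
Qed.

Lemma coneZ (I : finType) (Pr : pred I) (g : I -> 'rV[R]_n) a x :
  0 <= a -> in_cone Pr g x -> in_cone Pr g (a *: x).
Proof.
move=> a_ge0 [c [c_ge0 ->]]; exists (fun i => a * c i); split.
  by move=> i; rewrite mulr_ge0.
by rewrite scaler_sumr; apply: eq_bigr => i _; rewrite scalerA.
Qed.

Lemma cone_gen (I : finType) (Pr : pred I) (g : I -> 'rV[R]_n) (i : I) v :
  Pr i -> g i = v -> in_cone Pr g v.
Proof.
move=> Pri <-; exists (fun j => (j == i)%:R); split; first by move=> j; rewrite ler0n.
rewrite (bigD1 i) //= eqxx scale1r big1 ?addr0 // => j /andP [_ /negbTE ->].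
by rewrite scale0r.
Qed.

Lemma cone_sub (I J : finType) (Pr : pred I) (Pr' : pred J)
   (g : I -> 'rV[R]_n) (g' : J -> 'rV[R]_n) x :
  (forall i, Pr i -> in_cone Pr' g' (g i)) -> in_cone Pr g x -> in_cone Pr' g' x.
Proof.
move=> sub_g [c [c_ge0 ->]]; apply: (big_ind (in_cone Pr' g')).
- exact: cone0.
- by move=> ? ?; apply: coneD.
- by move=> i Pri; apply: coneZ => //; apply: sub_g.
Qed.

Lemma gammaD (i l j : 'I_n) : gamma R i l + gamma R l j = gamma R i j.
Proof. by apply/rowP => t; rewrite !mxE; ring. Qed.

Lemma gammaN (i j : 'I_n) : gamma R j i = - gamma R i j.
Proof. by apply/rowP => t; rewrite !mxE; ring. Qed.

End Cones.

Definition level_order (R : realFieldType) (T : finType) (r : T -> R)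
  (k' : nat) (sigma : T -> 'I_k'.+1) : Prop :=
  (forall i j, sigma i = sigma j -> r i = r j) /\
  (forall i j, val (sigma j) = (val (sigma i)).+1 -> r j < r i).

Lemma count_lt_witness (T : eqType) (p q : pred T) (s : seq T) x0 :
  subpred p q -> x0 \in s -> q x0 -> ~~ p x0 -> (count p s < count q s)%N.
Proof.
move=> pq; elim: s => //= y s IH; rewrite in_cons => /orP [/eqP ->|x0s] qx0 px0.
  by rewrite qx0 (negbTE px0) add0n add1n ltnS; apply: sub_count.
by have := IH x0s qx0 px0; case: (p y) (pq y) => [/(_ isT) -> /=|_]; lia.
Qed.

Section Ranking.
Variables (R : realFieldType) (T : finType) (r : T -> R).

Let vals : seq R := undup [seq r i | i <- enum T].
Let rank (v : R) : nat := count (fun w => v < w) vals.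

Let r_in_vals i : r i \in vals.
Proof. by rewrite mem_undup map_f ?mem_enum. Qed.

Let rank_lt v w : v < w -> w \in vals -> (rank w < rank v)%N.
Proof.
move=> lt_vw w_vals; apply: (count_lt_witness (x0 := w)) => //; last by rewrite ltxx.
by move=> u; exact: lt_trans.
Qed.

Let rank_bound v : v \in vals -> (rank v < size vals)%N.
Proof.
move=> v_vals; rewrite /rank -[X in (_ < X)%N](count_predT vals).
by apply: (count_lt_witness (x0 := v)) => //; rewrite ltxx.
Qed.

Let rank_inj : {in vals &, injective rank}.
Proof.
move=> v w v_vals w_vals e; case: (ltgtP v w) => // lt.
  by have := rank_lt lt w_vals; rewrite e ltnn.
by have := rank_lt lt v_vals; rewrite e ltnn.
Qed.

Let rank_onto b : (b < size vals)%N -> exists i, rank (r i) = b.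
Proof.
move=> b_lt.
have [_ eq_iota] : ((size [seq rank v | v <- vals] = size (iota 0 (size vals)))
                    * ([seq rank v | v <- vals] =i iota 0 (size vals)))%type.
  apply: uniq_min_size; last by rewrite size_map size_iota.
  - by rewrite (map_inj_in_uniq rank_inj) undup_uniq.
  - by move=> _ /mapP [v v_vals ->]; rewrite mem_iota add0n rank_bound.
have : b \in [seq rank v | v <- vals] by rewrite eq_iota mem_iota.
case/mapP=> v; rewrite mem_undup => /mapP [i _ ->] ->; by exists i.
Qed.

Lemma level_order_exists (x0 : T) :
  exists (k' : nat) (sigma : T -> 'I_k'.+1),
    (k' <= #|T| - 1)%N /\ surj sigma /\ level_order r sigma.
Proof.
pose k' := (size vals).-1.
have size_vals : k'.+1 = size vals.
  rewrite /k' prednK // lt0n size_eq0; apply/eqP => vals_nil.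
  by have := r_in_vals x0; rewrite vals_nil.
pose sigma i : 'I_k'.+1 := inord (rank (r i)).
have sigmaE i : val (sigma i) = rank (r i).
  by rewrite /sigma /= inordK // size_vals rank_bound.
exists k', sigma; split; [|split; [|split]].
- rewrite /k' -subn1 leq_sub2r // (leq_trans (size_undup _)) //.
  by rewrite size_map -cardE.
- move=> b; have b_lt : (val b < size vals)%N by rewrite -size_vals ltn_ord.
  by have [i rank_i] := rank_onto b_lt; exists i; apply: val_inj; rewrite sigmaE.
- by move=> i j /(congr1 val); rewrite !sigmaE; apply: rank_inj.
- move=> i j; rewrite !sigmaE => e; case: (ltgtP (r i) (r j)) => // [lt|eq].
    by have := rank_lt lt (r_in_vals j); rewrite e; lia.
  by rewrite eq in e; lia.
Qed.

End Ranking.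

Definition sign_cone (R : realFieldType) (n : nat) (r : 'I_n -> R) :
  'rV[R]_n -> Prop :=
  in_cone (fun ji : 'I_n * 'I_n => (ji.1 < ji.2)%N)
    (fun ji => Num.sg (r ji.1 - r ji.2) *: gamma R ji.1 ji.2).

Section SignCone.
Variables (R : realFieldType) (n k' : nat) (sigma : 'I_n -> 'I_k'.+1).
Variable r : 'I_n -> R.
Hypothesis sigma_surj : surj sigma.
Hypothesis sigma_order : level_order r sigma.

(* Walking through the intermediate blocks: if sigma(j) lies d+1 blocks after
   sigma(i), then r_j < r_i and gamma^{ij} is a sum of generators of Q_sigma. *)
Lemma level_chain d : forall i j, val (sigma j) = (val (sigma i) + d.+1)%N ->
  r j < r i /\ Qsigma sigma (gamma R i j).
Proof.
have [_ r_step] := sigma_order.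
elim: d => [|d IH] i j sij.
  rewrite addn1 in sij; split; first exact: r_step.
  by apply: (@cone_gen _ _ _ _ _ (i, j)) => //=; rewrite sij.
have next_lt : ((val (sigma i)).+1 < k'.+1)%N.
  by have := ltn_ord (sigma j); rewrite sij; lia.
have [l sl] := sigma_surj (Ordinal next_lt).
have sigma_l : val (sigma l) = (val (sigma i)).+1 by rewrite sl.
have [r_lj Q_lj] := IH l j (ltac:(lia)).
split; first exact: lt_trans r_lj (r_step _ _ sigma_l).
rewrite -(gammaD R i l j); apply: coneD => //.
by apply: (@cone_gen _ _ _ _ _ (i, l)) => //=; rewrite sigma_l.
Qed.

Lemma level_lt i j : (val (sigma i) < val (sigma j))%N ->
  r j < r i /\ Qsigma sigma (gamma R i j).
Proof. by move=> lt; apply: (@level_chain (val (sigma j) - val (sigma i)).-1); lia. Qed.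

Lemma level_reflect i j : r j < r i -> (val (sigma i) < val (sigma j))%N.
Proof.
move=> r_ji; case: (ltngtP (val (sigma i)) (val (sigma j))) => // [lt|eq].
  by have [r_ij _] := level_lt lt; have := lt_trans r_ji r_ij; rewrite ltxx.
by rewrite (sigma_order.1 _ _ (val_inj eq)) ltxx in r_ji.
Qed.

Lemma sign_cone_Qsigma x : sign_cone r x <-> Qsigma sigma x.
Proof.
split; apply: cone_sub.
  move=> [a b] /= _; case: (ltgtP (r a) (r b)) => lt.
  - rewrite ltr0_sg ?subr_lt0 // scaleN1r -gammaN.
    by have [_] := level_lt (level_reflect lt).
  - rewrite gtr0_sg ?subr_gt0 // scale1r.
    by have [_] := level_lt (level_reflect lt).
  - by rewrite lt subrr sgr0 scale0r; apply: cone0.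
move=> [i j] /= /eqP sij; have r_ji := sigma_order.2 _ _ sij.
case: (ltngtP i j) => [lt|lt|eq].
- apply: (@cone_gen _ _ _ _ _ (i, j)) => //=.
  by rewrite gtr0_sg ?subr_gt0 // scale1r.
- apply: (@cone_gen _ _ _ _ _ (j, i)) => //=.
  by rewrite ltr0_sg ?subr_lt0 // scaleN1r gammaN opprK.
- by rewrite (val_inj eq) ltxx in r_ji.
Qed.

End SignCone.

Section Affine.
Variables (R : realFieldType) (n k : nat) (m : 'M[R]_(k.+1, n)) (M : 'I_k.+1 -> R).

Lemma inL_add (P q : 'rV[R]_n) : inL m M P -> (inL m M (P + q) <-> inL0 m q).
Proof.
move=> LP; have sumE r : \sum_j m r j * co (P + q) j = M r + \sum_j m r j * co q j.
  by rewrite -(LP r) -big_split /=; apply: eq_bigr => j _; rewrite /co mxE mulrDr.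
split=> Lq r; last by rewrite sumE Lq addr0.
by apply: (addrI (M r)); rewrite addr0 -sumE.
Qed.

Lemma inL0_0 : inL0 m 0.
Proof. by move=> r; rewrite big1 // => j _; rewrite /co mxE mulr0. Qed.

Lemma isolated_iff (C : 'rV[R]_n -> Prop) (P0 : 'rV[R]_n) :
  inL m M P0 -> C 0 ->
  (forall x, ((exists q, C q /\ x = P0 + q) /\ inL m M x) <-> x = P0) <->
  (forall q, (inL0 m q /\ C q) <-> q = 0).
Proof.
move=> LP0 C0; split=> isolated q.
  split=> [[L0q Cq]|->]; last by split; [exact: inL0_0 | exact: C0].
  have /isolated e : (exists q', C q' /\ P0 + q = P0 + q') /\ inL m M (P0 + q).
    by split; [exists q | apply/inL_add].
  by apply: (addrI P0); rewrite addr0.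
split=> [[[q' [Cq' ->]] Lx]|->].
  have -> : q' = 0 by apply/isolated; split=> //; apply/(inL_add _ LP0).
  by rewrite addr0.
by split=> //; exists 0; split; [exact: C0 | rewrite addr0].
Qed.

End Affine.

Theorem mainTheorem10 (R : realFieldType) (n : nat) (Ps : 'rV[R]_n)
  (k : nat) (m : 'M[R]_(k.+1, n)) (M : 'I_k.+1 -> R) :
  (2 <= n)%N ->
  simplex_pos Ps ->
  (forall j, m ord0 j = 1) -> M ord0 = 1 ->
  (exists P, inL m M P /\ simplex_pos P) ->
  (forall P0 : 'rV[R]_n,
     (inL m M P0 /\ simplex_pos P0 /\
      (forall x, ((exists q, Qcone P0 Ps q /\ x = P0 + q) /\ inL m M x)
                 <-> x = P0))
     <->
     (exists (k' : nat) (sigma : 'I_n -> 'I_k'.+1),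
        (k' <= n - 1)%N /\ surj sigma /\
        (exists P, inL m M P /\ Csigma Ps sigma P) /\
        (forall x, (inL0 m x /\ Qsigma sigma x) <-> x = 0) /\
        inL m M P0 /\ Csigma Ps sigma P0 /\ simplex_pos P0))
  /\
  (forall (k' : nat) (sigma : 'I_n -> 'I_k'.+1), surj sigma ->
     forall P, Csigma Ps sigma P ->
       forall x, Qcone P Ps x <-> Qsigma sigma x).
Proof.
move=> n_ge2 _ _ _ _.
have Qcone_Qsigma k' (sigma : 'I_n -> 'I_k'.+1) : surj sigma ->
    forall P, Csigma Ps sigma P -> forall x, Qcone P Ps x <-> Qsigma sigma x.
  by move=> sigma_surj P [_ sigma_order] x; exact: (sign_cone_Qsigma sigma_surj sigma_order).
split=> // P0; split.
- move=> [LP0 [P0_pos isolated]].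
  have [k' [sigma [k'_le [sigma_surj sigma_order]]]] :=
    level_order_exists (fun i => co P0 i / co Ps i) (Ordinal (ltnW n_ge2)).
  have CP0 : Csigma Ps sigma P0.
    by split=> //; case: P0_pos => pos sum1; split=> // i; apply: ltW.
  exists k', sigma; rewrite card_ord in k'_le.
  do 3!(split=> //); first by exists P0.
  have L0_Qcone := proj1 (isolated_iff (C := Qcone P0 Ps) LP0 (cone0 _ _)) isolated.
  split=> // x; split=> [[L0x Qx]|->]; last by split; [exact: inL0_0 | exact: cone0].
  by apply/L0_Qcone; split=> //; apply/(Qcone_Qsigma _ _ sigma_surj _ CP0).
- move=> [k' [sigma [_ [sigma_surj [_ [L0_Qsigma [LP0 [CP0 P0_pos]]]]]]]].
  do 2!(split=> //); apply/(isolated_iff (C := Qcone P0 Ps) LP0 (cone0 _ _)) => q.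
  split=> [[L0q Qq]|->]; last by split; [exact: inL0_0 | exact: cone0].
  by apply/L0_Qsigma; split=> //; apply/(Qcone_Qsigma _ _ sigma_surj _ CP0).
Qed.
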